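(* Let $\Sigma$ be any set of $\mathscr{L}$-sentences. Then $\mathcal{M}_\Sigma$ satisfies every instance of the schema $E2$, i.e. the universal closure of $K(\phi\rightarrow\psi)\rightarrow K\phi\rightarrow K\psi$ for all $\mathscr{L}$-formulas $\phi,\psi$.
   Context: $\mathscr{L}$ is the language of Peano arithmetic (variables, constant $0$, unary $S$, binary $+$, $\cdot$) extended by a unary modal operator $K$: whenever $\phi$ is a formula, $K\phi$ is a formula (called purely modal). An $\mathscr{L}$-structure consists of a first-order structure for the arithmetic part together with a truth value for each purely modal formula $K\phi$ and each assignment $s$ of the variables (satisfying the standard constraints: independence from variables not free in $\phi$, invariance under alphabetic variants, and weak substitution of variables for variables); satisfaction is extended inductively to all formulas. For a set $\Sigma$ of sentences, $\Sigma\models\phi$ means every $\mathscr{L}$-structure satisfying all members of $\Sigma$ satisfies $\phi$ under all assignments. For a formula $\phi$ and an assignment $s$ into $\mathbb{N}$, $\phi^s$ is the sentence obtained by replacing each free variable $x$ of $\phi$ by the numeral $\overline{s(x)}$. $\mathcal{M}_\Sigma$ is the $\mathscr{L}$-structure with universe $\mathbb{N}$, arithmetic symbols interpreted as usual, and $\mathcal{M}_\Sigma\models K\phi[s]$ iff $\Sigma\models\phi^s$. $A\rightarrow B\rightarrow C$ abbreviates $A\rightarrow(B\rightarrow C)$. *)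

From Stdlib Require Import Arith List.
Import ListNotations.

Definition var := nat.

Inductive term : Type :=
| tVar : var -> term
| tZero : term
| tS : term -> term
| tPlus : term -> term -> term
| tMult : term -> term -> term.

Inductive formula : Type :=
| fEq : term -> term -> formula
| fNeg : formula -> formula
| fImp : formula -> formula -> formula
| fAll : var -> formula -> formula
| fK : formula -> formula.

Fixpoint term_vars (t : term) : list var :=
  match t with
  | tVar x => [x]
  | tZero => []
  | tS t => term_vars t
  | tPlus a b | tMult a b => term_vars a ++ term_vars b
  end.

Fixpoint free_vars (f : formula) : list var :=
  match f with
  | fEq a b => term_vars a ++ term_vars b
  | fNeg p => free_vars p
  | fImp p q => free_vars p ++ free_vars q
  | fAll x p => filter (fun y => negb (Nat.eqb y x)) (free_vars p)
  | fK p => free_vars p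
  end.

Definition sentence (f : formula) : Prop := free_vars f = [].

Definition univ_closure (f : formula) : formula :=
  fold_right fAll f (free_vars f).

Fixpoint tsubst_var (x y : var) (t : term) : term :=
  match t with
  | tVar z => if Nat.eqb z x then tVar y else tVar z
  | tZero => tZero
  | tS t => tS (tsubst_var x y t)
  | tPlus a b => tPlus (tsubst_var x y a) (tsubst_var x y b)
  | tMult a b => tMult (tsubst_var x y a) (tsubst_var x y b)
  end.

Fixpoint subst_var (x y : var) (f : formula) : formula :=
  match f with
  | fEq a b => fEq (tsubst_var x y a) (tsubst_var x y b)
  | fNeg p => fNeg (subst_var x y p)
  | fImp p q => fImp (subst_var x y p) (subst_var x y q)
  | fAll z p => if Nat.eqb z x then fAll z p else fAll z (subst_var x y p)
  | fK p => fK (subst_var x y p)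
  end.

(* y is substitutable for x in f: no free occurrence of x lies in the scope
   of a quantifier binding y *)
Fixpoint substitutable (x y : var) (f : formula) : Prop :=
  match f with
  | fEq _ _ => True
  | fNeg p => substitutable x y p
  | fImp p q => substitutable x y p /\ substitutable x y q
  | fAll z p =>
      z = x \/ ~ In x (free_vars p) \/ (z <> y /\ substitutable x y p)
  | fK p => substitutable x y p
  end.

Fixpoint var_rel (ctx : list (var * var)) (x y : var) : Prop :=
  match ctx with
  | [] => x = y
  | (a, b) :: c => (x = a /\ y = b) \/ (x <> a /\ y <> b /\ var_rel c x y)
  end.

Fixpoint term_aeq (ctx : list (var * var)) (t t' : term) : Prop :=
  match t, t' with
  | tVar x, tVar y => var_rel ctx x y
  | tZero, tZero => True
  | tS a, tS a' => term_aeq ctx a a'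
  | tPlus a b, tPlus a' b' => term_aeq ctx a a' /\ term_aeq ctx b b'
  | tMult a b, tMult a' b' => term_aeq ctx a a' /\ term_aeq ctx b b'
  | _, _ => False
  end.

Fixpoint form_aeq (ctx : list (var * var)) (f f' : formula) : Prop :=
  match f, f' with
  | fEq a b, fEq a' b' => term_aeq ctx a a' /\ term_aeq ctx b b'
  | fNeg p, fNeg p' => form_aeq ctx p p'
  | fImp p q, fImp p' q' => form_aeq ctx p p' /\ form_aeq ctx q q'
  | fAll x p, fAll y p' => form_aeq ((x, y) :: ctx) p p'
  | fK p, fK p' => form_aeq ctx p p'
  | _, _ => False
  end.

Definition alphabetic_variant (f f' : formula) : Prop := form_aeq [] f f'.

Record structure : Type := {
  dom : Type;
  zero_i : dom;
  succ_i : dom -> dom;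
  plus_i : dom -> dom -> dom;
  mult_i : dom -> dom -> dom;
  (* truth value of the purely modal formula K phi under assignment s *)
  kval : formula -> (var -> dom) -> Prop
}.

Definition upd {D : Type} (s : var -> D) (x : var) (d : D) : var -> D :=
  fun z => if Nat.eqb z x then d else s z.

Fixpoint eval (M : structure) (s : var -> dom M) (t : term) : dom M :=
  match t with
  | tVar x => s x
  | tZero => zero_i M
  | tS t => succ_i M (eval M s t)
  | tPlus a b => plus_i M (eval M s a) (eval M s b)
  | tMult a b => mult_i M (eval M s a) (eval M s b)
  end.

Fixpoint sat (M : structure) (s : var -> dom M) (f : formula) : Prop :=
  match f with
  | fEq a b => eval M s a = eval M s b
  | fNeg p => ~ sat M s p
  | fImp p q => sat M s p -> sat M s q
  | fAll x p => forall d : dom M, sat M (upd s x d) p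
  | fK p => kval M p s
  end.

Definition is_Lstructure (M : structure) : Prop :=
  (forall (p : formula) (s s' : var -> dom M),
      (forall x, In x (free_vars p) -> s x = s' x) ->
      (kval M p s <-> kval M p s'))
  /\
  (forall (p p' : formula) (s : var -> dom M),
      alphabetic_variant p p' -> (kval M p s <-> kval M p' s))
  /\
  (forall (p : formula) (x y : var) (s : var -> dom M),
      substitutable x y p ->
      (kval M (subst_var x y p) s <-> kval M p (upd s x (s y)))).

Definition entails (Sigma : formula -> Prop) (f : formula) : Prop :=
  forall M : structure, is_Lstructure M ->
    (forall g, Sigma g -> forall s : var -> dom M, sat M s g) ->
    forall s : var -> dom M, sat M s f.

Fixpoint numeral (n : nat) : term :=
  match n with
  | O => tZero
  | Datatypes.S n => tS (numeral n)
  end.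

Fixpoint tinst (s : var -> nat) (bound : list var) (t : term) : term :=
  match t with
  | tVar x => if in_dec Nat.eq_dec x bound then tVar x else numeral (s x)
  | tZero => tZero
  | tS t => tS (tinst s bound t)
  | tPlus a b => tPlus (tinst s bound a) (tinst s bound b)
  | tMult a b => tMult (tinst s bound a) (tinst s bound b)
  end.

Fixpoint finst (s : var -> nat) (bound : list var) (f : formula) : formula :=
  match f with
  | fEq a b => fEq (tinst s bound a) (tinst s bound b)
  | fNeg p => fNeg (finst s bound p)
  | fImp p q => fImp (finst s bound p) (finst s bound q)
  | fAll x p => fAll x (finst s (x :: bound) p)
  | fK p => fK (finst s bound p)
  end.

Definition inst (f : formula) (s : var -> nat) : formula := finst s [] f.

Definition M_Sigma (Sigma : formula -> Prop) : structure := {|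
  dom := nat;
  zero_i := 0;
  succ_i := Datatypes.S;
  plus_i := Nat.add;
  mult_i := Nat.mul;
  kval := fun p s => entails Sigma (inst p s)
|}.

Definition E2 (p q : formula) : formula :=
  fImp (fK (fImp p q)) (fImp (fK p) (fK q)).

(* K is interpreted in M_Sigma as consequence from Sigma, and instantiation
   by numerals commutes with implication, so E2 reduces to closure of
   semantic consequence under modus ponens. *)
From Stdlib Require Import List.

Lemma sat_fold_fAll (M : structure) (f : formula) (xs : list var) :
  (forall s, sat M s f) -> forall s, sat M s (fold_right fAll f xs).
Proof.
  intros Hf; induction xs as [|x xs IH]; intros s; simpl.
  - apply Hf.
  - intros d; apply IH.
Qed.

Lemma sat_univ_closure (M : structure) (f : formula) :
  (forall s, sat M s f) -> forall s, sat M s (univ_closure f).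
Proof. apply sat_fold_fAll. Qed.

Lemma entails_MP (Sigma : formula -> Prop) (f g : formula) :
  entails Sigma (fImp f g) -> entails Sigma f -> entails Sigma g.
Proof.
  intros Hfg Hf M HM HSigma s.
  exact (Hfg M HM HSigma s (Hf M HM HSigma s)).
Qed.

Lemma inst_fImp (f g : formula) (s : var -> nat) :
  inst (fImp f g) s = fImp (inst f s) (inst g s).
Proof. reflexivity. Qed.

Theorem lemma10 (Sigma : formula -> Prop)
  (HSigma : forall g, Sigma g -> sentence g) :
  forall (p q : formula) (s : var -> dom (M_Sigma Sigma)),
    sat (M_Sigma Sigma) s (univ_closure (E2 p q)).
Proof.
  intros p q.
  apply sat_univ_closure; intros s Hpq Hp; simpl in *.
  rewrite inst_fImp in Hpq.
  exact (entails_MP _ _ _ Hpq Hp).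
Qed.
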